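(* Let $d>2$ be a prime such that $-1\in QNR_d$ and $2\in QNR_d$. Then the equation $$d=\left(\frac{k}{2j}\right)^2\frac{m^2-e^2}{em}$$ has no solutions $k,j,m,e\in\mathbb{N}$ with $\gcd(m,e)=1$ and $m>e>0$.
   Context: For an odd prime $d$, $QR_d$ is the set of nonzero quadratic residues modulo $d$ in $\{1,\dots,d-1\}$, and $QNR_d=\{1,\dots,d-1\}\setminus QR_d$ is the set of quadratic nonresidues modulo $d$ (residues taken mod $d$). *)

From HB Require Import structures.
From mathcomp Require Import all_boot all_order all_algebra.
Set Implicit Arguments. Unset Strict Implicit. Unset Printing Implicit Defensive.

Definition QR (d : nat) : pred nat :=
  fun a => [&& 0 < a, a < d & [exists x : 'I_d, (x * x) %% d == a]].

Definition QNR (d : nat) : pred nat :=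
  fun a => [&& 0 < a, a < d & ~~ QR d a].

From mathcomp Require Import all_boot all_order all_algebra zify ring.
Set Implicit Arguments. Unset Strict Implicit. Unset Printing Implicit Defensive.

(* Clearing denominators, the equation says that d e m (m - e) (m + e) is a
   square, and we show by infinite descent on m that no coprime m > e > 0 can
   do this.  If m and e are both odd, ((m + e)/2, (m - e)/2) is a smaller such
   pair.  Otherwise e, m, m - e and m + e are pairwise coprime, so all of them
   are squares except the one divisible by d, which is d times a square.  If d
   divides m or m + e, then d divides the sum of two squares prime to d,
   (m + e) + (m - e) resp. m + e, so -1 is a square mod d; if d divides m - e,
   then (m + e) + (m - e) = 2m makes 2 a square mod d.  If d divides e, write
   m - e = c^2, m + e = f^2, m = b^2: then ((f + c)/2, (f - c)/2, b) is a
   primitive Pythagorean triple, and its parametrisation by (M, E) gives a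
   smaller pair, with M < b <= m. *)

Lemma coprime_sqr m n : coprime (m * m) (n * n) = coprime m n.
Proof. by rewrite !mulnn coprime_pexpl // coprime_pexpr. Qed.

Lemma coprime_mul_sqr x y z : coprime x y -> x * y = z * z -> exists u, x = u * u.
Proof.
move=> cxy xyz; exists (gcdn x z); apply/eqP; rewrite eqn_dvd; apply/andP; split.
  rewrite muln_gcdr !muln_gcdl !dvdn_gcd -xyz.
  by rewrite [z * x]mulnC !dvdn_mulr.
have cgy : coprime (gcdn x z * gcdn x z) y.
  by rewrite coprimeMl andbb (coprime_dvdl (dvdn_gcdl x z)).
by rewrite -(Gauss_dvdl _ cgy) xyz dvdn_mul ?dvdn_gcdr.
Qed.

Lemma mul_sqr_sqr x s t : 0 < s -> x * (s * s) = t * t -> exists u, x = u * u.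
Proof.
move=> s_gt0 xst.
have /dvdnP[u tE] : s %| t by rewrite -(@dvdn_pexp2r _ _ 2) // -!mulnn -xst dvdn_mull.
exists u; apply/eqP; rewrite -(eqn_pmul2r (_ : 0 < s * s)) ?muln_gt0 ?s_gt0 //.
by rewrite xst tE mulnACA.
Qed.

Lemma prime_coprime_ndvd d x y : prime d -> d %| x -> coprime x y -> ~~ (d %| y).
Proof. by move=> pd dx cxy; rewrite -prime_coprime // (coprime_dvdl dx cxy). Qed.

Lemma prime_mul_sqr d x y z : prime d -> ~~ (d %| x) -> coprime x y ->
  d * (x * y) = z * z -> exists u, x = u * u.
Proof.
move=> pd ndx cxy dxyz; apply: (@coprime_mul_sqr x (d * y) z).
  by rewrite coprimeMr cxy andbT coprime_sym prime_coprime.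
by rewrite -dxyz; ring.
Qed.

Lemma prime_dvd_mul_sqr d x y z : prime d -> d %| x -> coprime x y ->
  d * (x * y) = z * z -> exists u, x = d * (u * u).
Proof.
move=> pd /dvdnP[x' ->] cxy dxyz.
have [v x'y] : exists v, x' * y = v * v.
  by apply: (mul_sqr_sqr (t := z) (prime_gt0 pd)); rewrite -dxyz; ring.
have [u ->] := coprime_mul_sqr (coprime_dvdl (dvdn_mulr d (dvdnn _)) cxy) x'y.
by exists u; rewrite mulnC.
Qed.

Lemma prime_mul_sqr_dvd d x z : prime d -> d * x = z * z -> d %| x.
Proof.
move=> pd dxz; have : d %| z * z by rewrite -dxz dvdn_mulr.
rewrite Euclid_dvdM // orbb => dz.
by rewrite -(dvdn_pmul2l (prime_gt0 pd)) dxz dvdn_mul.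
Qed.

Lemma prime_dvd_mul4_sqr d x1 x2 x3 x4 z : prime d ->
  coprime x1 x2 -> coprime x1 x3 -> coprime x1 x4 ->
  coprime x2 x3 -> coprime x2 x4 -> coprime x3 x4 ->
  d %| x1 -> d * (x1 * x2 * x3 * x4) = z * z ->
  (exists u, x1 = d * (u * u)) /\
  [/\ exists u, x2 = u * u, exists u, x3 = u * u & exists u, x4 = u * u].
Proof.
move=> pd c12 c13 c14 c23 c24 c34 dx1 hz.
have ndvd y : coprime x1 y -> ~~ (d %| y) := prime_coprime_ndvd pd dx1.
split; first apply: (prime_dvd_mul_sqr pd dx1 (y := x2 * x3 * x4) (z := z)).
- by rewrite !coprimeMr c12 c13 c14.
- by rewrite -hz; ring.
split.
- apply: (prime_mul_sqr pd (ndvd _ c12) (y := x1 * x3 * x4) (z := z)).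
    by rewrite !coprimeMr c23 c24 coprime_sym c12.
  by rewrite -hz; ring.
- apply: (prime_mul_sqr pd (ndvd _ c13) (y := x1 * x2 * x4) (z := z)).
    by rewrite !coprimeMr c34 -!(coprime_sym _ x3) c13 c23.
  by rewrite -hz; ring.
- apply: (prime_mul_sqr pd (ndvd _ c14) (y := x1 * x2 * x3) (z := z)).
    by rewrite !coprimeMr -!(coprime_sym _ x4) c14 c24 c34.
  by rewrite -hz; ring.
Qed.

Lemma odd_eq_add_double p q : p <= q -> odd p = odd q -> exists r, q = p + 2 * r.
Proof.
move=> le_pq opq; exists (q - p)./2.
by have := odd_double_half (q - p); rewrite oddB // opq addbb -muln2; lia.
Qed.

Lemma pythagorean_param X Y b :
  X * X + Y * Y = b * b -> coprime X Y -> odd X -> 0 < Y ->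
  exists M E, [/\ coprime M E, 0 < E & E < M] /\
              [/\ X + E * E = M * M, Y = 2 * (M * E) & b = M * M + E * E].
Proof.
move=> XYb cXY oX Y_gt0.
have evenY : ~~ odd Y.
  apply/negP => oY; have := congr1 odd XYb; rewrite oddD !oddM oX oY !andbb /= => /esym ob.
  move: XYb; rewrite -(odd_double_half X) -(odd_double_half Y) -(odd_double_half b).
  by rewrite oX oY ob -!muln2; lia.
have /dvdnP[y Yy] : 2 %| Y by rewrite dvdn2.
have ob : odd b by move: (congr1 odd XYb); rewrite oddD !oddM oX (negbTE evenY) !andbb.
have Xb : X <= b by rewrite -leq_sqr -!mulnn -XYb leq_addr.
have [v bv] := odd_eq_add_double Xb (etrans oX (esym ob)).
have uv : (X + v) * v = y * y by move: XYb; rewrite bv Yy; lia.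
have cXv : coprime X v.
  apply: (@coprime_dvdr _ (y * y)); first by rewrite -uv dvdn_mull.
  apply: (@coprime_dvdr _ (Y * Y)); first by rewrite Yy dvdn_mul ?dvdn_mulr.
  by rewrite coprimeMr cXY.
have cvu : coprime v (X + v) by rewrite /coprime gcdnDr gcdnC.
have [M uM] := coprime_mul_sqr (etrans (coprime_sym _ _) cvu) uv.
have [E vE] := coprime_mul_sqr cvu (etrans (mulnC v _) uv).
have yME : y = M * E.
  by apply/eqP; rewrite -eqn_sqr -!mulnn -uv uM vE mulnACA.
exists M, E; split; last by split; [rewrite -vE uM | rewrite Yy yME mulnC | rewrite bv -uM -vE; lia].
split.
- by rewrite -coprime_sqr -uM -vE coprime_sym.
- by rewrite lt0n; apply: contraTneq Y_gt0 => E0; rewrite Yy yME E0 muln0.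
- by rewrite -ltn_sqr -!mulnn -uM -vE; have := odd_gt0 oX; lia.
Qed.

Lemma QNR_sqr_modN d c x y : prime d -> c %% d \in QNR d -> ~~ (d %| y) ->
  x * x != c * (y * y) %[mod d].
Proof.
move=> pd /and3P[c_gt0 c_lt_d /negP nQR] ndy; apply/negP => /eqP xyc; apply: nQR.
have d_gt0 := prime_gt0 pd.
(* Bezout gives a y = -1 (mod d), so x a is a square root of c mod d. *)
have [a _] := Bezoutl y d_gt0.
have -> : gcdn d y = 1 by apply/eqP; rewrite -/(coprime d y) prime_coprime.
move=> /dvdnP[q aq]; set w := a * y in aq.
have ww1 : w * w = 1 %[mod d].
  apply/eqP; rewrite -(eqn_modDr w) (_ : w * w + w = w * (1 + w)); last by ring.
  by rewrite aq mulnA !modnMl.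
apply/and3P; split=> //; apply/existsP; exists (Ordinal (ltn_pmod (x * a) d_gt0)).
rewrite /= modnMm (_ : x * a * (x * a) = x * x * (a * a)); last by ring.
rewrite -modnMml xyc modnMml (_ : c * (y * y) * (a * a) = c * (w * w)); last by rewrite /w; ring.
by rewrite -modnMmr ww1 modnMmr muln1.
Qed.

(* e m (m^2 - e^2) is the area of the Pythagorean triangle generated by
   (m, e); the equation of the theorem amounts to [congruent_pair d m e]. *)
Definition congruent_pair d m e :=
  [/\ coprime m e, 0 < e, e < m & exists z, d * (e * m * (m - e) * (m + e)) = z * z].

Lemma area_factors_coprime m e : coprime m e -> e <= m -> odd (m + e) ->
  [/\ coprime e (m - e), coprime e (m + e), coprime m (m - e), coprime m (m + e)
    & coprime (m - e) (m + e)].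
Proof.
move=> cme le_em; set c := m - e.
have mE : m = c + e by rewrite subnK.
rewrite mE in cme * => oD.
have cec : coprime e c by rewrite /coprime -(gcdnDr e c) gcdnC.
have cce : coprime c e by rewrite coprime_sym.
split.
- exact: cec.
- by rewrite /coprime !gcdnDr.
- by rewrite /coprime gcdnC gcdnDl.
- by rewrite /coprime gcdnDl.
- rewrite -addnA /coprime gcdnDl addnn -muln2 -/(coprime _ _) coprimeMr cce coprimen2.
  by move: oD; rewrite -addnA oddD addnn odd_double addbF.
Qed.

Lemma congruent_pair_parity d m e : congruent_pair d m e -> odd m && odd e || odd (m + e).
Proof.
move=> [cme _ _ _]; rewrite oddD.
case om: (odd m); case oe: (odd e) => //=.
by move: cme; rewrite /coprime => /eqP g1; have := dvdn_gcd 2 m e; rewrite g1 !dvdn2 om oe.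
Qed.

Lemma congruent_pair_odd d m e : congruent_pair d m e -> odd m -> odd e ->
  exists m' e', m' < m /\ congruent_pair d m' e'.
Proof.
move=> [cme e_gt0 em [z hz]] om oe.
have [e' me'] := odd_eq_add_double (ltnW em) (etrans oe (esym om)).
have ce' : coprime e e'.
  have : coprime e (2 * e') by rewrite /coprime -gcdnDl -me' gcdnC.
  by rewrite coprimeMr => /andP[].
exists (e + e'), e'; split; first lia.
split; [by rewrite /coprime gcdnC gcdnDr gcdnC | lia | lia |].
apply: (@mul_sqr_sqr _ 2 z) => //; rewrite -hz me' addnK addKn; ring.
Qed.

Lemma congruent_pair_of_pythagorean d X Y a b :
  X * X + Y * Y = b * b -> coprime X Y -> odd (X + Y) -> 0 < X -> 0 < Y ->
  2 * (X * Y) = d * (a * a) -> exists M E, M < b /\ congruent_pair d M E.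
Proof.
wlog oX : X Y / odd X => [hwlog XYb cXY oXY X_gt0 Y_gt0 XYa|].
  case oX: (odd X); first exact: (hwlog X Y).
  apply: (hwlog Y X) => //; first by move: oXY; rewrite oddD oX.
  - by rewrite addnC.
  - by rewrite coprime_sym.
  - by rewrite addnC.
  - by rewrite (mulnC Y).
move=> XYb cXY _ _ Y_gt0 XYa.
have [M [E [[cME E_gt0 EM] [XME YME bME]]]] := pythagorean_param XYb cXY oX Y_gt0.
exists M, E; split.
  rewrite bME; have := leq_pmull M (ltn_trans E_gt0 EM).
  have : 0 < E * E by rewrite muln_gt0 E_gt0.
  lia.
split=> //; apply: (@mul_sqr_sqr _ 2 (d * a)) => //.
have XE : (M - E) * (M + E) = X by rewrite -subn_sqr -!mulnn -XME addnK.
rewrite -[E * M * _ * _]mulnA XE (_ : d * a * (d * a) = d * (d * (a * a))); last by ring.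
by rewrite -XYa YME; ring.
Qed.

Section Descent.

Variable d : nat.
Hypotheses (d_prime : prime d) (QNR_m1 : (d - 1) %% d \in QNR d) (QNR_2 : 2 %% d \in QNR d).

Lemma dvdn_sum_sqr x y : d %| x * x + y * y -> d %| y.
Proof.
move=> dxy; apply/negPn/negP => ndy.
have /negP := QNR_sqr_modN x d_prime QNR_m1 ndy; apply.
rewrite -(eqn_modDr (y * y)) mulnBl mul1n subnK ?leq_pmull ?prime_gt0 //.
by rewrite modnMr; rewrite /dvdn in dxy.
Qed.

Lemma dvdn_sqr_double x y : x * x = 2 * (y * y) %[mod d] -> d %| y.
Proof.
move=> xy; apply/negPn/negP => ndy.
by have /negP := QNR_sqr_modN x d_prime QNR_2 ndy; apply; apply/eqP.
Qed.

Lemma congruent_pair_ndvd_m m e : congruent_pair d m e -> odd (m + e) -> ~~ (d %| m).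
Proof.
move=> [cme _ em [z hz]] oD; apply/negP => dm.
have [ceC ceD cmC cmD cCD] := area_factors_coprime cme (ltnW em) oD.
have hz' : d * (m * e * (m - e) * (m + e)) = z * z by rewrite -hz; ring.
have [_ [_ [c cE] [f fE]]] := prime_dvd_mul4_sqr d_prime cme cmC cmD ceC ceD cCD dm hz'.
have dc : d %| c.
  apply: (@dvdn_sum_sqr f); rewrite -fE -cE (_ : m + e + (m - e) = 2 * m) ?dvdn_mull //.
  lia.
by have := prime_coprime_ndvd d_prime dm cmC; rewrite cE dvdn_mulr.
Qed.

Lemma congruent_pair_ndvd_add m e : congruent_pair d m e -> odd (m + e) -> ~~ (d %| m + e).
Proof.
move=> [cme _ em [z hz]] oD; apply/negP => dD.
have [ceC ceD cmC cmD cCD] := area_factors_coprime cme (ltnW em) oD.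
rewrite coprime_sym in ceD; rewrite coprime_sym in cmD; rewrite coprime_sym in cCD.
rewrite coprime_sym in cme.
have hz' : d * ((m + e) * e * m * (m - e)) = z * z by rewrite -hz; ring.
have [_ [[a aE] [b bE] _]] := prime_dvd_mul4_sqr d_prime ceD cmD cCD cme ceC cmC dD hz'.
have da : d %| a by apply: (@dvdn_sum_sqr b); rewrite -aE -bE.
by have := prime_coprime_ndvd d_prime dD ceD; rewrite aE dvdn_mulr.
Qed.

Lemma congruent_pair_ndvd_sub m e : congruent_pair d m e -> odd (m + e) -> ~~ (d %| m - e).
Proof.
move=> [cme _ em [z hz]] oD; apply/negP => dC.
have [ceC ceD cmC cmD cCD] := area_factors_coprime cme (ltnW em) oD.
rewrite coprime_sym in ceC; rewrite coprime_sym in cmC; rewrite coprime_sym in cme.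
have hz' : d * ((m - e) * e * m * (m + e)) = z * z by rewrite -hz; ring.
have [[c cE] [_ [b bE] [f fE]]] := prime_dvd_mul4_sqr d_prime ceC cmC cCD cme ceD cmD dC hz'.
have db : d %| b.
  apply: (@dvdn_sqr_double f); rewrite -fE -bE -(modnMDl (c * c)).
  by rewrite mulnC -cE; congr (_ %% _); lia.
by have := prime_coprime_ndvd d_prime dC cmC; rewrite bE dvdn_mulr.
Qed.

Lemma congruent_pair_dvd_e m e : congruent_pair d m e -> odd (m + e) -> d %| e ->
  exists m' e', m' < m /\ congruent_pair d m' e'.
Proof.
move=> [cme e_gt0 em [z hz]] oD de.
have [ceC ceD cmC cmD cCD] := area_factors_coprime cme (ltnW em) oD.
rewrite coprime_sym in cme.
have [[a aE] [[b bE] [c cE] [f fE]]] := prime_dvd_mul4_sqr d_prime cme ceC ceD cmC cmD cCD de hz.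
have odd_c : odd c by move: oD; rewrite oddD -oddB ?(ltnW em) // cE oddM andbb.
have odd_f : odd f by move: oD; rewrite fE oddM andbb.
have cf : c <= f by rewrite -leq_sqr -!mulnn -cE -fE; lia.
have [Y fY] := odd_eq_add_double cf (etrans odd_c (esym odd_f)).
have c2e : c * c + 2 * e = f * f by rewrite -cE -fE; lia.
have cf2b : c * c + f * f = 2 * (b * b) by rewrite -cE -fE -bE; lia.
have Y_gt0 : 0 < Y.
  by rewrite lt0n; apply: contraTneq e_gt0 => Y0; move: c2e; rewrite fY Y0; lia.
have cYY : coprime (c + Y) Y.
  have : coprime c (2 * Y) by rewrite /coprime -gcdnDl -fY -/(coprime c f) -coprime_sqr -cE -fE.
  by rewrite coprimeMr => /andP[_ cY]; rewrite /coprime gcdnC gcdnDr gcdnC.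
have [M [E [Mb cpME]]] : exists M E, M < b /\ congruent_pair d M E.
  apply: (@congruent_pair_of_pythagorean d (c + Y) Y a) => //.
  - by move: cf2b; rewrite fY; lia.
  - by rewrite (_ : c + Y + Y = f) //; lia.
  - lia.
  - by rewrite -aE; move: c2e; rewrite fY; lia.
exists M, E; split=> //.
by rewrite bE (leq_trans Mb) // leq_pmulr // (leq_ltn_trans _ Mb).
Qed.

Lemma no_congruent_pair m e : ~ congruent_pair d m e.
Proof.
elim/ltn_ind: m e => m IH e cp.
have descend : (exists m' e', m' < m /\ congruent_pair d m' e') -> False.
  by move=> [m' [e' [lt_m'm cp']]]; apply: IH lt_m'm e' cp'.
have /orP[/andP[om oe] | oD] := congruent_pair_parity cp.
  exact: descend (congruent_pair_odd cp om oe).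
have [_ _ _ [z hz]] := cp.
move: (prime_mul_sqr_dvd d_prime hz); rewrite !Euclid_dvdM //.
case/orP => [/orP[/orP[de | dm] | dC] | dD].
- exact: descend (congruent_pair_dvd_e cp oD de).
- exact: negP (congruent_pair_ndvd_m cp oD) dm.
- exact: negP (congruent_pair_ndvd_sub cp oD) dC.
- exact: negP (congruent_pair_ndvd_add cp oD) dD.
Qed.

End Descent.

Import GRing.Theory Num.Theory.
Local Open Scope ring_scope.

Lemma congruent_pair_of_rat d k j m e : (0 < d)%N -> coprime m e -> (0 < e)%N -> (e < m)%N ->
  (d%:R : rat) = (k%:R / (2 * j%:R)) ^+ 2 * ((m%:R ^+ 2 - e%:R ^+ 2) / (e%:R * m%:R)) ->
  congruent_pair d m e.
Proof.
move=> d_gt0 cme e_gt0 em H; split=> //.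
have [j0 | j_gt0] := posnP j.
  move: H; rewrite j0 mulr0 invr0 mulr0 expr0n mul0r => /eqP; rewrite pnatr_eq0 => /eqP d0.
  by rewrite d0 in d_gt0.
apply: (@mul_sqr_sqr _ (2 * j) (k * (m * m - e * e))); first by rewrite muln_gt0.
have le_em := ltnW em.
apply/eqP; rewrite -(eqr_nat rat) !(natrM, natrB, natrD) ?leq_mul // H.
apply/eqP; field.
by rewrite !pnatr_eq0 -!lt0n j_gt0 e_gt0 (ltn_trans e_gt0 em).
Qed.

Theorem lemma11 (d : nat) (hd : prime d) (hd2 : (2 < d)%N)
    (hm1 : ((d - 1) %% d)%N \in QNR d) (h2 : (2 %% d)%N \in QNR d) :
  ~ exists k j m e : nat,
      [/\ coprime m e, (0 < e)%N, (e < m)%N &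
        (d%:R : rat) = (k%:R / (2 * j%:R)) ^+ 2 * ((m%:R ^+ 2 - e%:R ^+ 2) / (e%:R * m%:R))].
Proof.
move=> [k [j [m [e [cme e_gt0 em H]]]]].
apply: (no_congruent_pair hd hm1 h2 (m := m) (e := e)).
exact: congruent_pair_of_rat (prime_gt0 hd) cme e_gt0 em H.
Qed.
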